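(* Let $f\colon X\to Y$ be a perfect surjective map between regular spaces $X$ and $Y$. If $X$ is very I-favorable, then $Y$ is very I-favorable.
   Context: For a family $\mathcal P$ of open subsets of $X$ contained in a family $\mathcal Q$ of open subsets of $X$, write $\mathcal P\subset_!\mathcal Q$ if for every subfamily $\mathcal S\subset\mathcal P$ and every point $x\notin\operatorname{cl}_X\bigcup\mathcal S$ there exists $W\in\mathcal P$ with $x\in W$ and $W\cap\bigcup\mathcal S=\emptyset$. $[\mathcal Q]^{\le\omega}$ denotes the set of countable subfamilies of $\mathcal Q$. A family $\mathcal C\subset[\mathcal Q]^{\le\omega}$ is a club if (i) for every increasing sequence $C_1\subset C_2\subset\cdots$ in $\mathcal C$, $\bigcup_nC_n\in\mathcal C$, and (ii) every $B\in[\mathcal Q]^{\le\omega}$ is contained in some $C\in\mathcal C$. A space $X$ with topology $\mathcal T_X$ is very I-favorable if $\{\mathcal P\in[\mathcal T_X]^{\le\omega}:\mathcal P\subset_!\mathcal T_X\}$ contains a club. A perfect map is a continuous closed map whose fibers are compact. *)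

From Stdlib Require Import List.

Set Implicit Arguments.

Definition family (X : Type) := (X -> Prop) -> Prop.

Definition is_topology (X : Type) (T : family X) : Prop :=
  T (fun _ => True) /\
  (forall F : family X, (forall U, F U -> T U) ->
     T (fun x => exists U, F U /\ U x)) /\
  (forall U V, T U -> T V -> T (fun x => U x /\ V x)).

Definition is_closed (X : Type) (T : family X) (F : X -> Prop) : Prop :=
  T (fun x => ~ F x).

Definition cl (X : Type) (T : family X) (A : X -> Prop) (x : X) : Prop :=
  forall U, T U -> U x -> exists y, U y /\ A y.

Definition bigU (X : Type) (S : family X) (x : X) : Prop :=
  exists U, S U /\ U x.

Definition subfam (X : Type) (P Q : family X) : Prop := forall U, P U -> Q U.

Definition T1_space (X : Type) (T : family X) : Prop :=
  forall x y : X, x <> y -> exists U, T U /\ U x /\ ~ U y.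

Definition regular_space (X : Type) (T : family X) : Prop :=
  is_topology T /\ T1_space T /\
  forall (F : X -> Prop) (x : X), is_closed T F -> ~ F x ->
    exists U V, T U /\ T V /\ U x /\ (forall y, F y -> V y) /\
      (forall y, U y -> V y -> False).

Definition continuous (X Y : Type) (TX : family X) (TY : family Y) (f : X -> Y) : Prop :=
  forall V, TY V -> TX (fun x => V (f x)).

Definition image (X Y : Type) (f : X -> Y) (A : X -> Prop) (y : Y) : Prop :=
  exists x, A x /\ f x = y.

Definition closed_map (X Y : Type) (TX : family X) (TY : family Y) (f : X -> Y) : Prop :=
  forall F, is_closed TX F -> is_closed TY (image f F).

Definition compact (X : Type) (T : family X) (K : X -> Prop) : Prop :=
  forall C : family X, (forall U, C U -> T U) -> (forall x, K x -> bigU C x) ->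
    exists l : list (X -> Prop), (forall U, In U l -> C U) /\
      (forall x, K x -> exists U, In U l /\ U x).

Definition perfect_map (X Y : Type) (TX : family X) (TY : family Y) (f : X -> Y) : Prop :=
  continuous TX TY f /\ closed_map TX TY f /\
  forall y : Y, compact TX (fun x => f x = y).

(* countable (possibly finite or empty) family *)
Definition countable_fam (X : Type) (P : family X) : Prop :=
  exists g : nat -> (X -> Prop), forall U, P U -> exists n, g n = U.

Definition ctbl_sub (X : Type) (Q P : family X) : Prop :=
  subfam P Q /\ countable_fam P.

Definition sub_bang (X : Type) (T : family X) (P Q : family X) : Prop :=
  subfam P Q /\
  forall (S : family X) (x : X), subfam S P -> ~ cl T (bigU S) x ->
    exists W, P W /\ W x /\ (forall y, W y -> bigU S y -> False).

Definition club (X : Type) (Q : family X) (C : family X -> Prop) : Prop :=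
  (forall P, C P -> ctbl_sub Q P) /\
  (forall Cs : nat -> family X, (forall n, C (Cs n)) ->
     (forall n, subfam (Cs n) (Cs (S n))) ->
     C (fun U => exists n, Cs n U)) /\
  (forall B, ctbl_sub Q B -> exists P, C P /\ subfam B P).

Definition very_I_favorable (X : Type) (T : family X) : Prop :=
  exists C : family X -> Prop, club T C /\
    forall P, C P -> ctbl_sub T P /\ sub_bang T P T.

(* For open W in X let f#(W) = Y \ f(X \ W) = {y | f^-1(y) is contained in W}; it is open
   because f is closed.  Given a club C in X of families P with P ⊂_! T_X, the club in Y
   consists of the countable open families that contain f#(W_1 ∪ ... ∪ W_k) whenever the
   W_i lie in a member of C chosen (monotonically, by a fixed hull operator) to contain
   the preimages of finitely many of their own members.  If P is such a family, the
   members of C chosen along an enumeration of P form a chain whose union Q lies in C and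
   contains the preimages of all members of P.  For S ⊆ P and y outside the closure of
   ⋃S, every point of the compact fibre f^-1(y) is separated from f^-1(⋃S) by a member
   of Q; finitely many of them cover the fibre, and f# of their union is the member of P
   separating y from ⋃S. *)
From Stdlib Require Import List Classical ClassicalEpsilon Cantor Lia
  FunctionalExtensionality PropExtensionality.
Import ListNotations.

Set Implicit Arguments.

Lemma countable_fam_empty (X : Type) : countable_fam (fun _ : X -> Prop => False).
Proof. exists (fun _ _ => False). intros U []. Qed.

Lemma countable_fam_single (X : Type) (V : X -> Prop) : countable_fam (fun U => U = V).
Proof. exists (fun _ => V). intros U ->. exists 0. reflexivity. Qed.

Lemma countable_fam_bigcup (X : Type) (Ps : nat -> family X) :
  (forall n, countable_fam (Ps n)) -> countable_fam (fun U => exists n, Ps n U).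
Proof.
  intro H. destruct (choice _ H) as [g Hg].
  exists (fun m => let (n, k) := of_nat m in g n k).
  intros U [n HU]. destruct (Hg n U HU) as [k Hk].
  exists (to_nat (n, k)). rewrite cancel_of_to. exact Hk.
Qed.

Lemma countable_fam_union (X : Type) (P1 P2 : family X) :
  countable_fam P1 -> countable_fam P2 -> countable_fam (fun U => P1 U \/ P2 U).
Proof.
  intros H1 H2.
  destruct (countable_fam_bigcup (fun n => match n with 0 => P1 | _ => P2 end))
    as [g Hg]; [intros [|n]; assumption|].
  exists g. intros U [HU | HU]; apply Hg; [exists 0 | exists 1]; exact HU.
Qed.

Fixpoint nat_list (k m : nat) : list nat :=
  match k with
  | 0 => []
  | S k' => let (a, b) := of_nat m in a :: nat_list k' b
  end.

Lemma nat_list_onto (l : list nat) : exists m, nat_list (length l) m = l.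
Proof.
  induction l as [|a l [m Hm]]; [exists 0; reflexivity|].
  exists (to_nat (a, m)). cbn -[of_nat to_nat]. rewrite cancel_of_to, Hm. reflexivity.
Qed.

Lemma countable_fam_lists (X Y : Type) (P : family X) (H : list (X -> Prop) -> family Y) :
  countable_fam P -> (forall l, countable_fam (H l)) ->
  countable_fam (fun W => exists l, (forall U, In U l -> P U) /\ H l W).
Proof.
  intros [g Hg] HH. destruct (choice _ HH) as [h Hh].
  exists (fun m => let (k, r) := of_nat m in
                   let (a, b) := of_nat r in h (map g (nat_list k a)) b).
  intros W [l [Hl HW]].
  assert (Hcode : exists ns, map g ns = l).
  { clear HW. induction l as [|U l IH]; [exists []; reflexivity|].
    destruct IH as [ns Hns]; [intros V HV; apply Hl; right; exact HV|].
    destruct (Hg U (Hl U (or_introl eq_refl))) as [k Hk].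
    exists (k :: ns). simpl. rewrite Hk, Hns. reflexivity. }
  destruct Hcode as [ns <-]. destruct (nat_list_onto ns) as [a Ha].
  destruct (Hh _ W HW) as [b Hb].
  exists (to_nat (length ns, to_nat (a, b))). rewrite !cancel_of_to, Ha. exact Hb.
Qed.

Lemma countable_fam_enum (X : Type) (P : family X) (V0 : X -> Prop) :
  countable_fam P -> P V0 ->
  exists e : nat -> (X -> Prop), (forall n, P (e n)) /\ (forall U, P U -> exists n, e n = U).
Proof.
  intros [g Hg] HV0.
  exists (fun n => if excluded_middle_informative (P (g n)) then g n else V0). split.
  - intro n. destruct excluded_middle_informative; assumption.
  - intros U HU. destruct (Hg U HU) as [n <-]. exists n.
    destruct excluded_middle_informative; [reflexivity | contradiction].
Qed.

Lemma ctbl_sub_bigcup (X : Type) (Q : family X) (Ps : nat -> family X) :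
  (forall n, ctbl_sub Q (Ps n)) -> ctbl_sub Q (fun U => exists n, Ps n U).
Proof.
  intro HPs. split.
  - intros U [n HU]. exact (proj1 (HPs n) U HU).
  - apply countable_fam_bigcup. intro n. exact (proj2 (HPs n)).
Qed.

Lemma chain_mono (A : Type) (Cs : nat -> family A) :
  (forall n, subfam (Cs n) (Cs (S n))) -> forall n m, n <= m -> subfam (Cs n) (Cs m).
Proof.
  intros Hchain n m Hnm. induction Hnm as [|m _ IH]; intros U HU; [exact HU|].
  apply Hchain, IH, HU.
Qed.

Lemma chain_list_bound (A : Type) (Cs : nat -> family A) (l : list (A -> Prop)) :
  (forall n, subfam (Cs n) (Cs (S n))) ->
  (forall U, In U l -> exists n, Cs n U) -> exists N, forall U, In U l -> Cs N U.
Proof.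
  intro Hchain. induction l as [|V l IH]; intro Hl; [exists 0; intros U []|].
  destruct IH as [N HN]; [intros U HU; apply Hl; right; exact HU|].
  destruct (Hl V (or_introl eq_refl)) as [k Hk].
  exists (max N k). intros U [<- | HU].
  - apply (chain_mono Cs Hchain (n := k)); [lia | exact Hk].
  - apply (chain_mono Cs Hchain (n := N)); [lia | exact (HN U HU)].
Qed.

Fixpoint initial (A : Type) (e : nat -> A) (n : nat) : list A :=
  match n with 0 => [] | S n' => e n' :: initial e n' end.

Lemma in_initial (A : Type) (P : A -> Prop) (e : nat -> A) (n : nat) :
  (forall k, P (e k)) -> forall a, In a (initial e n) -> P a.
Proof.
  intro He. induction n as [|n IH]; intros a Ha; [destruct Ha|].
  destruct Ha as [<- | Ha]; [apply He | exact (IH a Ha)].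
Qed.

Lemma club_hull (X : Type) (T : family X) (C : family X -> Prop) :
  club T C -> exists hull : family X -> family X,
    (forall B, C (hull B)) /\ (forall B, ctbl_sub T B -> subfam B (hull B)).
Proof.
  intros [_ [_ Hsup]].
  destruct (choice (fun B P => C P /\ (ctbl_sub T B -> subfam B P))) as [hull Hhull].
  - intro B. destruct (classic (ctbl_sub T B)) as [HB | HB].
    + destruct (Hsup B HB) as [P [HP HBP]]. exists P. tauto.
    + assert (H0 : ctbl_sub T (fun _ => False))
        by (split; [intros U [] | apply countable_fam_empty]).
      destruct (Hsup _ H0) as [P [HP _]]. exists P. tauto.
  - exists hull. split; intro B; [exact (proj1 (Hhull B)) | exact (proj2 (Hhull B))].
Qed.

Lemma not_cl_nbhd (X : Type) (T : family X) (A : X -> Prop) (x : X) :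
  ~ cl T A x -> exists U, T U /\ U x /\ (forall z, U z -> A z -> False).
Proof.
  intro Hx. apply NNPP. intro Hno. apply Hx. intros U HU Ux.
  apply NNPP. intro Hempty. apply Hno. exists U. split; [exact HU | split; [exact Ux|]].
  intros z Uz Az. apply Hempty. exists z. split; assumption.
Qed.

Lemma continuous_not_cl (X Y : Type) (TX : family X) (TY : family Y) (f : X -> Y)
    (A : Y -> Prop) (B : X -> Prop) (x : X) :
  continuous TX TY f -> (forall z, B z -> A (f z)) -> ~ cl TY A (f x) -> ~ cl TX B x.
Proof.
  intros Hf HBA Hx Hcl. destruct (not_cl_nbhd Hx) as [U [HU [Ux Hdisj]]].
  destruct (Hcl _ (Hf U HU) Ux) as [z [Uz Bz]].
  exact (Hdisj _ Uz (HBA z Bz)).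
Qed.

Definition lunion (X : Type) (l : list (X -> Prop)) : X -> Prop :=
  fun x => exists V, In V l /\ V x.

Lemma lunion_open (X : Type) (T : family X) (l : list (X -> Prop)) :
  is_topology T -> (forall V, In V l -> T V) -> T (lunion l).
Proof. intros [_ [Hunion _]] Hl. exact (Hunion (fun V => In V l) Hl). Qed.

Definition preim_fam (X Y : Type) (f : X -> Y) (S : family Y) : family X :=
  fun V => exists U, S U /\ V = (fun x => U (f x)).

Definition small_image (X Y : Type) (f : X -> Y) (W : X -> Prop) : Y -> Prop :=
  fun y => ~ image f (fun x => ~ W x) y.

Lemma small_imageP (X Y : Type) (f : X -> Y) (W : X -> Prop) (y : Y) :
  small_image f W y <-> forall x, f x = y -> W x.
Proof.
  split.
  - intros Hy x Hx. apply NNPP. intro Wx. apply Hy. exists x. split; assumption.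
  - intros Hy [x [Wx Hx]]. exact (Wx (Hy x Hx)).
Qed.

Lemma small_image_open (X Y : Type) (TX : family X) (TY : family Y) (f : X -> Y)
    (W : X -> Prop) :
  closed_map TX TY f -> TX W -> TY (small_image f W).
Proof.
  intros Hf HW. apply (Hf (fun x => ~ W x)). unfold is_closed.
  replace (fun x => ~ ~ W x) with W; [exact HW|].
  apply functional_extensionality. intro x.
  apply propositional_extensionality. split; [tauto | apply NNPP].
Qed.

Lemma small_image_separates (X Y : Type) (f : X -> Y) (l : list (X -> Prop))
    (A : Y -> Prop) (y : Y) :
  (forall y, exists x, f x = y) ->
  (forall x, f x = y -> lunion l x) ->
  (forall V x, In V l -> V x -> A (f x) -> False) ->
  small_image f (lunion l) y /\ (forall z, small_image f (lunion l) z -> A z -> False).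
Proof.
  intros Honto Hcover Hdisj. split; [exact (proj2 (small_imageP _ _ _) Hcover)|].
  intros z Hz Az. destruct (Honto z) as [x <-].
  destruct (proj1 (small_imageP _ _ _) Hz x eq_refl) as [V [HV Vx]].
  exact (Hdisj V x HV Vx Az).
Qed.

Definition small_images (X Y : Type) (f : X -> Y) (Q : family X) : family Y :=
  fun W => exists l, (forall V, In V l -> Q V) /\ W = small_image f (lunion l).

Lemma small_images_open (X Y : Type) (TX : family X) (TY : family Y) (f : X -> Y)
    (Q : family X) :
  is_topology TX -> closed_map TX TY f -> subfam Q TX -> subfam (small_images f Q) TY.
Proof.
  intros Htop Hf HQ W [l [Hl ->]].
  apply (small_image_open _ Hf), lunion_open; [exact Htop|].
  intros V HV. exact (HQ V (Hl V HV)).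
Qed.

Lemma small_images_countable (X Y : Type) (f : X -> Y) (Q : family X) :
  countable_fam Q -> countable_fam (small_images f Q).
Proof.
  intro HQ.
  destruct (countable_fam_lists (fun l W => W = small_image f (lunion l)) HQ
              (fun l => countable_fam_single (small_image f (lunion l)))) as [g Hg].
  exists g. intros W HW. exact (Hg W HW).
Qed.

Section PerfectImage.

Variables (X Y : Type) (TX : family X) (TY : family Y) (f : X -> Y).
Hypothesis TX_top : is_topology TX.
Hypothesis f_cont : continuous TX TY f.
Hypothesis f_closed : closed_map TX TY f.
Hypothesis f_fibers : forall y, compact TX (fun x => f x = y).
Hypothesis f_onto : forall y, exists x, f x = y.

Variables (C : family X -> Prop) (hull : family X -> family X).
Hypothesis C_club : club TX C.
Hypothesis C_bang : forall Q, C Q -> sub_bang TX Q TX.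
Hypothesis hull_C : forall B, C (hull B).
Hypothesis hull_sup : forall B, ctbl_sub TX B -> subfam B (hull B).

Fixpoint pullback (s : list (Y -> Prop)) : family X :=
  match s with
  | [] => hull (fun _ => False)
  | U :: s' => hull (fun V => pullback s' V \/ V = (fun x => U (f x)))
  end.

Lemma pullback_C (s : list (Y -> Prop)) : C (pullback s).
Proof. destruct s; apply hull_C. Qed.

Lemma pullback_ctbl (s : list (Y -> Prop)) : ctbl_sub TX (pullback s).
Proof. exact (proj1 C_club _ (pullback_C s)). Qed.

Lemma pullback_cons (U : Y -> Prop) (s : list (Y -> Prop)) : TY U ->
  subfam (pullback s) (pullback (U :: s)) /\ pullback (U :: s) (fun x => U (f x)).
Proof.
  intro HU. destruct (pullback_ctbl s) as [Hs_open Hs_ctbl].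
  assert (HB : ctbl_sub TX (fun V => pullback s V \/ V = (fun x => U (f x)))).
  { split.
    - intros V [HV | ->]; [exact (Hs_open V HV) | exact (f_cont HU)].
    - exact (countable_fam_union Hs_ctbl (countable_fam_single _)). }
  split.
  - intros V HV. apply (hull_sup HB). left. exact HV.
  - apply (hull_sup HB). right. reflexivity.
Qed.

Definition saturated (P : family Y) : Prop :=
  forall s, (forall U, In U s -> P U) -> subfam (small_images f (pullback s)) P.

Fixpoint saturate (B : family Y) (n : nat) : family Y :=
  match n with
  | 0 => B
  | S n' => fun W => saturate B n' W \/
      exists s, (forall U, In U s -> saturate B n' U) /\ small_images f (pullback s) W
  end.

Lemma saturate_ctbl (B : family Y) (n : nat) : ctbl_sub TY B -> ctbl_sub TY (saturate B n).
Proof.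
  intro HB. induction n as [|n [IH_open IH_ctbl]]; [exact HB|]. split.
  - intros W [HW | [s [_ HW]]]; [exact (IH_open W HW)|].
    exact (small_images_open TX_top f_closed (proj1 (pullback_ctbl s)) HW).
  - apply countable_fam_union; [exact IH_ctbl|].
    apply (countable_fam_lists (fun s => small_images f (pullback s)) IH_ctbl).
    intro s. exact (small_images_countable f (proj2 (pullback_ctbl s))).
Qed.

Lemma saturated_bigcup_saturate (B : family Y) :
  saturated (fun W => exists n, saturate B n W).
Proof.
  intros s Hs W HW.
  destruct (chain_list_bound (saturate B) s (fun n U HU => or_introl HU) Hs) as [N HN].
  exists (S N). right. exists s. split; assumption.
Qed.

Lemma saturated_club : club TY (fun P => ctbl_sub TY P /\ saturated P).
Proof.
  split; [|split].
  - intros P [HP _]. exact HP.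
  - intros Ps HPs Hchain. split; [apply ctbl_sub_bigcup; intro n; exact (proj1 (HPs n))|].
    intros s Hs W HW. destruct (chain_list_bound Ps s Hchain Hs) as [N HN].
    exists N. exact (proj2 (HPs N) s HN W HW).
  - intros B HB. exists (fun W => exists n, saturate B n W). split; [split|].
    + apply ctbl_sub_bigcup. intro n. exact (saturate_ctbl n HB).
    + apply saturated_bigcup_saturate.
    + intros U HU. exists 0. exact HU.
Qed.

Lemma pullback_exhaust (P : family Y) (V0 : Y -> Prop) :
  ctbl_sub TY P -> P V0 ->
  exists Q, C Q /\ (forall U, P U -> Q (fun x => U (f x))) /\
    forall l, (forall W, In W l -> Q W) ->
      exists s, (forall U, In U s -> P U) /\ (forall W, In W l -> pullback s W).
Proof.
  intros [HP_open HP_ctbl] HV0.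
  destruct (countable_fam_enum _ HP_ctbl HV0) as [e [HeP He_onto]].
  assert (Hcons : forall n, TY (e n)) by (intro n; exact (HP_open _ (HeP n))).
  assert (Hchain : forall n, subfam (pullback (initial e n)) (pullback (initial e (S n))))
    by (intro n; exact (proj1 (pullback_cons (initial e n) (Hcons n)))).
  exists (fun V => exists n, pullback (initial e n) V). split; [|split].
  - exact (proj1 (proj2 C_club) _ (fun n => pullback_C _) Hchain).
  - intros U HU. destruct (He_onto U HU) as [n <-]. exists (S n).
    exact (proj2 (pullback_cons (initial e n) (Hcons n))).
  - intros l Hl. destruct (chain_list_bound _ l Hchain Hl) as [N HN].
    exists (initial e N). split; [exact (in_initial P e N HeP) | exact HN].
Qed.

Lemma saturated_sub_bang (P : family Y) :
  ctbl_sub TY P -> saturated P -> sub_bang TY P TY.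
Proof.
  intros HP Hsat. split; [exact (proj1 HP)|].
  assert (HV0 : P (small_image f (lunion []))).
  { apply (Hsat []); [intros U []|]. exists []. split; [intros V [] | reflexivity]. }
  destruct (pullback_exhaust _ HP HV0) as [Q [HQ_C [HQ_preim HQ_fin]]].
  intros S y HS Hy.
  set (separating := fun W => Q W /\ forall x, W x -> bigU S (f x) -> False).
  assert (Hcover : forall x, f x = y -> bigU separating x).
  { intros x <-.
    destruct (proj2 (C_bang HQ_C) (preim_fam f S) x) as [W [HW [Wx Hdisj]]].
    - intros V [U [HU ->]]. exact (HQ_preim U (HS U HU)).
    - apply (continuous_not_cl (A := bigU S) f_cont); [|exact Hy].
      intros z [V [[U [HU ->]] Uz]]. exists U. split; assumption.
    - exists W. split; [split; [exact HW|] | exact Wx].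
      intros z Wz [U [HU Uz]]. apply (Hdisj z Wz).
      exists (fun x => U (f x)). split; [exists U; split; [exact HU | reflexivity] | exact Uz]. }
  destruct (@f_fibers y separating) as [l [Hl Hl_cover]]; [|exact Hcover|].
  { intros W [HW _]. exact (proj1 (proj1 C_club Q HQ_C) W HW). }
  destruct (HQ_fin l (fun W HW => proj1 (Hl W HW))) as [s [Hs Hls]].
  destruct (small_image_separates f (bigU S) f_onto Hl_cover (fun V x HV => proj2 (Hl V HV) x))
    as [Hy_in Hdisj].
  exists (small_image f (lunion l)). split; [|split; [exact Hy_in | exact Hdisj]].
  apply (Hsat s Hs). exists l. split; [exact Hls | reflexivity].
Qed.

End PerfectImage.

Theorem theorem3p4 (X Y : Type) (TX : family X) (TY : family Y) (f : X -> Y) :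
  regular_space TX -> regular_space TY ->
  perfect_map TX TY f -> (forall y : Y, exists x : X, f x = y) ->
  very_I_favorable TX -> very_I_favorable TY.
Proof.
  intros [TX_top _] _ [f_cont [f_closed f_fibers]] f_onto [C [C_club C_good]].
  destruct (club_hull C_club) as [hull [hull_C hull_sup]].
  exists (fun P => ctbl_sub TY P /\ saturated f hull P). split.
  - exact (saturated_club TX_top f_closed hull C_club hull_C).
  - intros P [HP Hsat]. split; [exact HP|].
    apply (saturated_sub_bang f_cont f_fibers f_onto C_club
             (fun Q HQ => proj2 (C_good Q HQ)) hull_C hull_sup HP Hsat).
Qed.
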